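(* For every $k\ge 0$, as formal power series in $x$, $$\sum_{n} L(n,k)x^n=\sum_{n}L(n,n-k)x^n=\frac{x^k e_k(x)}{(1-x)^{k+1}(1+x)^k}.$$
   Context: $e(n,j)$ is the number of $j$-element subsets of $\{1,\dots,n\}$ with even sum (the empty set counts as even), and $e_k(x)=\sum_{j=0}^k e(k,j)x^j$. Losanitsch's triangle $(L(n,k))_{n,k\ge 0}$ is defined by $L(0,k)=[k=0]$, $L(1,k)=[k\le 1]$ for $k\ge0$, $L(n,k)=0$ for $k<0$, and for $n\ge 2$ and all $k$: $L(n,k)=L(n-2,k)+\binom{n-2}{k-1}+L(n-2,k-2)$, where $\binom{m}{j}=0$ for $j<0$ or $j>m$. The sums are over $n\ge 0$ (terms with $n-k<0$ or $n<k$ vanish). *)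

From mathcomp Require Import all_boot all_order all_algebra.
Set Implicit Arguments. Unset Strict Implicit. Unset Printing Implicit Defensive.
Import Order.TTheory GRing.Theory Num.Theory.
Local Open Scope ring_scope.

Definition binz (m : nat) (j : int) : nat :=
  match j with Posz j' => 'C(m, j') | Negz _ => 0%N end.

(* Losanitsch's triangle L(n,k), k an integer (L(n,k) = 0 for k < 0). *)
Fixpoint Los (n : nat) (k : int) : nat :=
  match n with
  | 0 => (k == 0)
  | 1 => (k == 0) || (k == 1)
  | n'.+2 => (Los n' k + binz n' (k - 1) + Los n' (k - 2))%N
  end.

(* e(n,j): number of j-element subsets of {1,...,n} with even sum;
   element i : 'I_n represents the number i+1. *)
Definition e_cnt (n j : nat) : nat :=
  #|[set A : {set 'I_n} | (#|A| == j) && ~~ odd (\sum_(i in A) i.+1)]|.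

Definition e_poly (k : nat) : {poly rat} :=
  \sum_(j < k.+1) (e_cnt k j)%:R *: 'X^j.

Definition fps := nat -> rat.

Definition fps_of_poly (p : {poly rat}) : fps := fun n => p`_n.

Definition fps_mul (a b : fps) : fps :=
  fun n => \sum_(i < n.+1) a i * b (n - i)%N.

(* Coefficients b_0..b_n of the inverse of a (a 0 assumed nonzero):
   b_0 = 1/a_0,  b_m = -(1/a_0) * \sum_{i=1}^m a_i b_{m-i}. *)
Definition fps_inv_step (a : fps) (s : seq rat) : seq rat :=
  let m := size s in
  rcons s (- (a 0%N)^-1 * \sum_(1 <= i < m.+1) a i * nth 0 s (m - i)%N).

Definition fps_inv_seq (a : fps) (n : nat) : seq rat :=
  iter n (fps_inv_step a) [:: (a 0%N)^-1].

Definition fps_inv (a : fps) : fps := fun n => nth 0 (fps_inv_seq a n) n.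

Definition rhs_series (k : nat) : fps :=
  fps_mul (fps_of_poly ('X^k * e_poly k))
          (fps_inv (fps_of_poly ((1 - 'X) ^+ k.+1 * (1 + 'X) ^+ k))).

From mathcomp Require Import all_boot all_order all_algebra.
From mathcomp Require Import ring zify.
Set Implicit Arguments. Unset Strict Implicit. Unset Printing Implicit Defensive.
Import GRing.Theory.
Local Open Scope ring_scope.

(* Let G_k be the generating function of column k of the triangle and
   D_k = (1-x)^(k+1) (1+x)^k.  The recurrence of the triangle reads
   (1 - x^2) G_(k+2) = x^2 (x^(k+1)/(1-x)^(k+2) + G_k).  Weighting the subsets
   of {1..k} by the sign of their sum gives
   2 e_k = (1+x)^k + prod_(j=1..k) (1 + (-1)^j x), hence
   e_(k+2) = x (1+x)^(k+1) + (1 - x^2) e_k.  Together they prove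
   D_k G_k = x^k e_k by induction on k in steps of two, and D_k can be divided
   out because its constant term is 1.  The second identity is the symmetry
   L(n, n-k) = L(n, k) of the triangle. *)

Definition trunc_fps (a : fps) (m : nat) : {poly rat} := \poly_(i < m.+1) a i.

Lemma coef_trunc_fps a m i : (i <= m)%N -> (trunc_fps a m)`_i = a i.
Proof. by move=> le_im; rewrite coef_poly ltnS le_im. Qed.

Lemma fps_mul_coefM (p q : {poly rat}) (a b : fps) m :
  (forall i, (i <= m)%N -> p`_i = a i) -> (forall i, (i <= m)%N -> q`_i = b i) ->
  fps_mul a b m = (p * q)`_m.
Proof.
move=> pa qb; rewrite coefM; apply: eq_bigr => i _.
by rewrite pa ?qb // ?leq_subr // -ltnS.
Qed.

Lemma fps_mul_poly p q m : fps_mul (fps_of_poly p) (fps_of_poly q) m = (p * q)`_m.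
Proof. exact: fps_mul_coefM. Qed.

Lemma fps_mul_trunc p a m : fps_mul (fps_of_poly p) a m = (p * trunc_fps a m)`_m.
Proof. by apply: fps_mul_coefM => // i /coef_trunc_fps. Qed.

Lemma coefM_eq (p p' q q' : {poly rat}) m :
  (forall i, (i <= m)%N -> p`_i = p'`_i) -> (forall i, (i <= m)%N -> q`_i = q'`_i) ->
  (p * q)`_m = (p' * q')`_m.
Proof.
move=> pp' qq'; rewrite -fps_mul_poly.
by apply: fps_mul_coefM => i le_im; [rewrite -pp' | rewrite -qq'].
Qed.

Lemma coefM_trunc_fps p a m i :
  (i <= m)%N -> (p * trunc_fps a m)`_i = fps_mul (fps_of_poly p) a i.
Proof.
move=> le_im; rewrite fps_mul_trunc; apply: coefM_eq => // j le_ji.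
by rewrite !coef_trunc_fps // (leq_trans le_ji).
Qed.

Lemma eq_fps_mulr a b c : b =1 c -> fps_mul a b =1 fps_mul a c.
Proof. by move=> bc m; apply: eq_bigr => i _; rewrite bc. Qed.

Lemma fps_mulDr a b c m :
  fps_mul a (fun i => b i + c i) m = fps_mul a b m + fps_mul a c m.
Proof. by rewrite -big_split; apply: eq_bigr => i _; rewrite mulrDr. Qed.

Lemma fps_mul_polyM (p q : {poly rat}) a :
  fps_mul (fps_of_poly (p * q)) a =1 fps_mul (fps_of_poly p) (fps_mul (fps_of_poly q) a).
Proof.
move=> m; rewrite fps_mul_trunc -mulrA; symmetry.
by apply: fps_mul_coefM => // i le_im; rewrite coefM_trunc_fps.
Qed.

Definition fps_shift (s : nat) (a : fps) : fps :=
  fun n => if (s <= n)%N then a (n - s)%N else 0.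

Lemma fps_mul_Xn s a : fps_mul (fps_of_poly 'X^s) a =1 fps_shift s a.
Proof.
move=> m; rewrite fps_mul_trunc coefXnM /fps_shift.
by case: ltnP => // le_sm; rewrite coef_trunc_fps // leq_subr.
Qed.

Lemma fps_mul_subXn s a m : fps_mul (fps_of_poly (1 - 'X^s)) a m = a m - fps_shift s a m.
Proof.
by rewrite fps_mul_trunc mulrBl mul1r coefB coef_trunc_fps // -fps_mul_Xn fps_mul_trunc.
Qed.

Lemma size_fps_inv_seq a n : size (fps_inv_seq a n) = n.+1.
Proof. by elim: n => //= n IHn; rewrite /fps_inv_step size_rcons IHn. Qed.

Lemma nth_fps_inv_seq a n j : (j <= n)%N -> nth 0 (fps_inv_seq a n) j = fps_inv a j.
Proof.
elim: n => [|n IHn]; first by rewrite leqn0 => /eqP ->.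
rewrite leq_eqVlt => /orP[/eqP -> //|lt_jn].
by rewrite /= /fps_inv_step nth_rcons size_fps_inv_seq lt_jn IHn.
Qed.

Lemma fps_invS a m :
  fps_inv a m.+1 = - (a 0%N)^-1 * \sum_(i < m.+1) a i.+1 * fps_inv a (m - i)%N.
Proof.
rewrite /fps_inv /= /fps_inv_step nth_rcons size_fps_inv_seq ltnn eqxx.
rewrite big_add1 /= big_mkord; congr (_ * _); apply: eq_bigr => i _.
by rewrite subSS nth_fps_inv_seq // leq_subr.
Qed.

Lemma fps_mul_inv a m : a 0%N != 0 -> fps_mul a (fps_inv a) m = (m == 0)%:R.
Proof.
move=> a0; case: m => [|m]; first by rewrite /fps_mul big_ord1 /fps_inv /= mulfV.
rewrite /fps_mul big_ord_recl /= subn0 fps_invS mulrA mulrN mulfV // mulN1r.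
by rewrite addrC; apply/eqP; rewrite subr_eq0; apply/eqP; apply: eq_bigr.
Qed.

(* [a] is the power series expansion of the rational function [N / D]. *)
Definition is_fps_quot (a : fps) (N D : {poly rat}) : Prop :=
  forall n, fps_mul (fps_of_poly D) a n = N`_n.

Lemma eq_is_fps_quot a b N D : a =1 b -> is_fps_quot a N D -> is_fps_quot b N D.
Proof. by move=> ab aND n; rewrite -(eq_fps_mulr _ ab). Qed.

Lemma is_fps_quot_poly N : is_fps_quot (fps_of_poly N) N 1.
Proof. by move=> n; rewrite fps_mul_poly mul1r. Qed.

Lemma is_fps_quotMl P a N D : is_fps_quot a N D -> is_fps_quot a (P * N) (P * D).
Proof. by move=> aND n; rewrite fps_mul_polyM (eq_fps_mulr _ aND) fps_mul_poly. Qed.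

Lemma is_fps_quotD a b N M D :
  is_fps_quot a N D -> is_fps_quot b M D -> is_fps_quot (fun n => a n + b n) (N + M) D.
Proof. by move=> aND bMD n; rewrite fps_mulDr aND bMD coefD. Qed.

Lemma is_fps_quot_shift s a N D :
  is_fps_quot a N D -> is_fps_quot (fps_shift s a) ('X^s * N) D.
Proof.
move=> aND n; rewrite -(eq_fps_mulr _ (fps_mul_Xn s a)) -fps_mul_polyM (mulrC D).
by rewrite fps_mul_polyM fps_mul_Xn coefXnM /fps_shift aND; case: ltnP.
Qed.

Lemma is_fps_quot_subXn s a N D :
  is_fps_quot (fun n => a n - fps_shift s a n) N D -> is_fps_quot a N ((1 - 'X^s) * D).
Proof.
move=> aND n.
by rewrite (mulrC _ D) fps_mul_polyM (eq_fps_mulr _ (fps_mul_subXn s a)) aND.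
Qed.

Lemma is_fps_quot_inv a (N D : {poly rat}) :
  D`_0 != 0 -> is_fps_quot a N D -> a =1 fps_mul (fps_of_poly N) (fps_inv (fps_of_poly D)).
Proof.
move=> D0 aND m; set I := trunc_fps (fps_inv (fps_of_poly D)) m.
rewrite fps_mul_trunc -/I (@coefM_eq N (D * trunc_fps a m) I I) //; last first.
  by move=> i le_im; rewrite coefM_trunc_fps // aND.
rewrite mulrAC (@coefM_eq _ 1 _ (trunc_fps a m)) ?mul1r ?coef_trunc_fps //.
by move=> i le_im; rewrite coefM_trunc_fps // fps_mul_inv // coef1.
Qed.

Lemma prod_add1_subsets (R : comPzSemiRingType) (I : finType) (c : I -> R) (x : R) :
  \prod_(i : I) (c i * x + 1) = \sum_(A : {set I}) (\prod_(i in A) c i) * x ^+ #|A|.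
Proof.
rewrite bigA_distr; apply: eq_bigr => A _.
by rewrite -big_mkcond /= big_split /= prodr_const.
Qed.

Lemma e_poly_subsets k : e_poly k =
  \sum_(A : {set 'I_k}) (if ~~ odd (\sum_(i in A) i.+1)%N then 'X^#|A| else 0).
Proof.
rewrite /e_poly /e_cnt.
transitivity (\sum_(j < k.+1) \sum_(A : {set 'I_k})
   (if (#|A| == j) && ~~ odd (\sum_(i in A) i.+1)%N then 'X^#|A| else 0 : {poly rat})).
  apply: eq_bigr => j _.
  rewrite -big_mkcond /= cardsE -sum1_card natr_sum scaler_suml.
  by apply: eq_bigr => A /andP[/eqP -> _]; rewrite scale1r.
rewrite exchange_big /=; apply: eq_bigr => A _.
have ltAk : (#|A| < k.+1)%N by rewrite ltnS (leq_trans (max_card _)) ?card_ord.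
rewrite (bigD1 (Ordinal ltAk)) //= eqxx /= [X in _ + X]big1 ?addr0 // => j neq_jA.
by case: eqP => // eq_Aj; move: neq_jA; rewrite -val_eqE /= eq_Aj eqxx.
Qed.

Definition signed_prod (k : nat) : {poly rat} := \prod_(i < k) ((-1) ^+ i.+1 * 'X + 1).

Lemma e_poly_double k : 2%:R * e_poly k = (1 + 'X) ^+ k + signed_prod k.
Proof.
have -> : (1 + 'X : {poly rat}) ^+ k = \sum_(A : {set 'I_k}) 'X^#|A|.
  rewrite -[in LHS](card_ord k) -prodr_const.
  rewrite (eq_bigr (fun i : 'I_k => 1 * 'X + 1)); last by move=> i _; rewrite mul1r addrC.
  by rewrite prod_add1_subsets; apply: eq_bigr => A _; rewrite prodr_const expr1n mul1r.
rewrite /signed_prod prod_add1_subsets e_poly_subsets mulr_sumr -big_split /=.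
apply: eq_bigr => A _; rewrite prodrXr -signr_odd.
case: (odd _); rewrite /= ?expr1 ?mulr0 ?mulN1r ?subrr ?expr0 ?mul1r //.
by rewrite mulr2n mulrDl mul1r.
Qed.

Lemma signed_prodSS k : signed_prod k.+2 = signed_prod k * (1 - 'X^2).
Proof.
rewrite /signed_prod !big_ord_recr /= -mulrA; congr (_ * _).
set s : {poly rat} := (-1) ^+ k.+1.
have -> : (-1 : {poly rat}) ^+ k.+2 = - s by rewrite exprS mulN1r.
have ss : s * s = 1 by rewrite -exprD addnn -signr_odd odd_double.
transitivity (1 - (s * s) * 'X^2); first by ring.
by rewrite ss mul1r.
Qed.

Lemma two_poly_neq0 : (2%:R : {poly rat}) != 0.
Proof. by rewrite -polyC_natr polyC_eq0. Qed.

Lemma e_poly0 : e_poly 0 = 1.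
Proof.
apply: (mulfI two_poly_neq0).
by rewrite e_poly_double /signed_prod big_ord0 expr0 mulr1 mulr2n.
Qed.

Lemma e_poly1 : e_poly 1 = 1.
Proof.
apply: (mulfI two_poly_neq0).
rewrite e_poly_double /signed_prod big_ord1 /= !expr1 mulN1r mulr1; ring.
Qed.

Lemma e_polySS k : e_poly k.+2 = 'X * (1 + 'X) ^+ k.+1 + (1 - 'X^2) * e_poly k.
Proof.
apply: (mulfI two_poly_neq0).
rewrite e_poly_double mulrDr [_ * (_ * e_poly k)]mulrCA e_poly_double signed_prodSS.
rewrite !exprS; ring.
Qed.

Lemma binz_neg n (k : int) : (k < 0)%R -> binz n k = 0%N.
Proof. by case: k. Qed.

Lemma binz_sym n (j : int) : binz n (Posz n - j) = binz n j.
Proof.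
case: j => [j|p].
  case: (leqP j n) => le_jn.
    have -> : (Posz n - Posz j)%R = Posz (n - j) by lia.
    by rewrite /= bin_sub.
  by rewrite binz_neg /= ?bin_small //; lia.
have -> : (Posz n - Negz p)%R = Posz (n + p.+1) by rewrite NegzE opprK PoszD.
by rewrite /= bin_small // addnS ltnS leq_addr.
Qed.

Lemma Los_neg n (k : int) : (k < 0)%R -> Los n k = 0%N.
Proof.
elim/ltn_ind: n k => -[|[|n]] IHn k k_lt0 /=.
- by case: k k_lt0.
- by case: k k_lt0 => // -[].
by rewrite !IHn ?binz_neg //; lia.
Qed.

Lemma Los_0 n : Los n 0 = 1%N.
Proof. by elim/ltn_ind: n => -[|[|n]] IHn //=; rewrite IHn // !Los_neg. Qed.

Lemma Los_1SS n : Los n.+2 1 = (Los n 1).+1.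
Proof. by rewrite /= (@Los_neg n (1 - 2)) // addn0 bin0 addn1. Qed.

Lemma Los_SS n k : Los n.+2 k.+2 = (Los n k.+2 + 'C(n, k.+1) + Los n k)%N.
Proof. by rewrite [LHS]/= subn1 /=; congr (_ + _ + Los n _)%N; lia. Qed.

Lemma Los_sym n (k : int) : Los n (Posz n - k) = Los n k.
Proof.
elim/ltn_ind: n k => -[|[|n]] IHn k.
- by rewrite /= sub0r oppr_eq0.
- rewrite /= orbC; congr (nat_of_bool (_ || _)); apply/eqP/eqP; lia.
transitivity (Los n (Posz n - (k - 2)) + binz n (Posz n - (k - 1)) + Los n (Posz n - k))%N.
  by rewrite [LHS]/=; congr (Los n _ + binz n _ + Los n _)%N; lia.
by rewrite !IHn // binz_sym /=; lia.
Qed.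

Definition binom_fps (j : nat) : fps := fun n => ('C(n, j))%:R.

Lemma is_fps_quot_binom j : is_fps_quot (binom_fps j) 'X^j ((1 - 'X) ^+ j.+1).
Proof.
elim: j => [|j IHj].
  have -> : (1 - 'X : {poly rat}) ^+ 1 = (1 - 'X^1) * 1 by rewrite mulr1 !expr1.
  apply: is_fps_quot_subXn; apply: eq_is_fps_quot (is_fps_quot_poly 1) => -[|n];
    by rewrite /binom_fps /fps_shift /fps_of_poly coef1 /= !bin0 ?subr0 ?subrr.
have -> : (1 - 'X : {poly rat}) ^+ j.+2 = (1 - 'X^1) * (1 - 'X) ^+ j.+1.
  by rewrite expr1 exprS.
have -> : ('X^(j.+1) : {poly rat}) = 'X^1 * 'X^j by rewrite expr1 exprS.
apply: is_fps_quot_subXn; apply: eq_is_fps_quot (is_fps_quot_shift 1 IHj) => -[|n].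
  by rewrite /binom_fps /fps_shift /= subrr.
by rewrite /binom_fps /fps_shift /= subn1 binS natrD addrAC subrr add0r.
Qed.

Definition los_fps (k : nat) : fps := fun n => (Los n k)%:R.

Lemma is_fps_quot_los0 :
  is_fps_quot (los_fps 0) ('X^0 * e_poly 0) ((1 - 'X) ^+ 1 * (1 + 'X) ^+ 0).
Proof.
rewrite e_poly0 !expr0 !mulr1; apply: eq_is_fps_quot (is_fps_quot_binom 0) => n.
by rewrite /binom_fps /los_fps bin0 Los_0.
Qed.

Lemma is_fps_quot_los1 :
  is_fps_quot (los_fps 1) ('X^1 * e_poly 1) ((1 - 'X) ^+ 2 * (1 + 'X) ^+ 1).
Proof.
have -> : (1 - 'X : {poly rat}) ^+ 2 * (1 + 'X) ^+ 1 = (1 - 'X^2) * (1 - 'X) ^+ 1 by ring.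
rewrite e_poly1 -(expr0 'X); apply: is_fps_quot_subXn.
apply: eq_is_fps_quot (is_fps_quot_shift 1 (is_fps_quot_binom 0)) => -[|[|n]].
- by rewrite /los_fps /fps_shift /= subrr.
- by rewrite /los_fps /fps_shift /= subr0.
by rewrite /los_fps /binom_fps /fps_shift Los_1SS bin0 /= !subSS subn0
  -[(Los n 1).+1]addn1 natrD addrAC subrr add0r.
Qed.

Lemma is_fps_quot_losSS k :
  is_fps_quot (los_fps k) ('X^k * e_poly k) ((1 - 'X) ^+ k.+1 * (1 + 'X) ^+ k) ->
  is_fps_quot (los_fps k.+2) ('X^(k.+2) * e_poly k.+2)
              ((1 - 'X) ^+ k.+3 * (1 + 'X) ^+ k.+2).
Proof.
move=> IHk; pose D : {poly rat} := (1 - 'X) ^+ k.+2 * (1 + 'X) ^+ k.+1.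
have binD : is_fps_quot (binom_fps k.+1) ((1 + 'X) ^+ k.+1 * 'X^(k.+1)) D.
  by rewrite /D (mulrC ((1 - 'X) ^+ k.+2)); exact/is_fps_quotMl/is_fps_quot_binom.
have losD : is_fps_quot (los_fps k) ((1 - 'X^2) * ('X^k * e_poly k)) D.
  have -> : D = (1 - 'X^2) * ((1 - 'X) ^+ k.+1 * (1 + 'X) ^+ k) by rewrite /D !exprS; ring.
  exact: is_fps_quotMl.
have -> : (1 - 'X) ^+ k.+3 * (1 + 'X) ^+ k.+2 = (1 - 'X^2) * D by rewrite /D !exprS; ring.
have -> : 'X^(k.+2) * e_poly k.+2 =
    'X^2 * ((1 + 'X) ^+ k.+1 * 'X^(k.+1) + (1 - 'X^2) * ('X^k * e_poly k)).
  by rewrite e_polySS !exprS; ring.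
apply: is_fps_quot_subXn.
apply: eq_is_fps_quot (is_fps_quot_shift 2 (is_fps_quotD binD losD)) => -[|[|n]];
  rewrite /los_fps /binom_fps /fps_shift ?Los_SS /= ?subrr ?subr0 //.
by rewrite !subSS subn0 !natrD; ring.
Qed.

Lemma is_fps_quot_los k :
  is_fps_quot (los_fps k) ('X^k * e_poly k) ((1 - 'X) ^+ k.+1 * (1 + 'X) ^+ k).
Proof.
elim/ltn_ind: k => -[|[|k]] IHk; first exact: is_fps_quot_los0.
  exact: is_fps_quot_los1.
exact/is_fps_quot_losSS/IHk.
Qed.

Lemma coef0_los_den k : ((1 - 'X) ^+ k.+1 * (1 + 'X) ^+ k : {poly rat})`_0 != 0.
Proof. by rewrite -horner_coef0 !hornerE !expr1n mulr1 oner_eq0. Qed.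

Theorem proposition3p3 (k : nat) :
  (forall n : nat, ((Los n k)%:R : rat) = rhs_series k n) /\
  (forall n : nat, ((Los n (n%:Z - k%:Z))%:R : rat) = rhs_series k n).
Proof.
have Los_rhs n : ((Los n k)%:R : rat) = rhs_series k n.
  exact: is_fps_quot_inv (coef0_los_den k) (is_fps_quot_los k) n.
by split=> // n; rewrite Los_sym.
Qed.
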